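(* Under Assumption A(b),(c) in setting (E), let $\mathbf p\in(0,1]$, $b\ge1$, set $\widetilde S^{-1}:=Gx^0$ and for $k\ge0$ $$\widetilde S^k:=\begin{cases}\widetilde S^{k-1}+2G_{\mathcal B_k}x^k-3G_{\mathcal B_k}x^{k-1}+G_{\mathcal B_k}x^{k-2}&\text{with probability }1-\mathbf p,\\ \overline S^k&\text{with probability }\mathbf p,\end{cases}$$ where $\mathcal B_k$ is a fresh i.i.d. mini-batch of size $b$, and $\overline S^k$ satisfies $\mathbb E_k[\overline S^k]=S^k$ and $\mathbb E_k\|\overline S^k-S^k\|^2\le\sigma_k^2$ (e.g. $\overline S^k=S^k$ with $\sigma_k=0$, or a mega-batch average of $2\mathbf G(x^k,\zeta)-\mathbf G(x^{k-1},\zeta)$ of size $n_k$). Then $\widetilde S^k$ belongs to class (B) with $\Delta_k:=\|\widetilde S^k-S^k\|^2$, $\tau=\mathbf p$, $\kappa=\mathbf p$, $\Theta=\frac{8(1-\mathbf p)L^2}{b}$, $\hat\Theta=\frac{2(1-\mathbf p)L^2}{b}$, $\delta_k=\mathbf p\sigma_k^2$.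
   Context: Setting: $G:\mathbb{R}^p\to\mathbb{R}^p$, $T:\mathbb{R}^p\rightrightarrows\mathbb{R}^p$, $\Phi:=G+T$, $\mathrm{zer}\,\Phi:=\{x:0\in Gx+Tx\}$, $J_{\eta T}:=(\mathbb{I}+\eta T)^{-1}$. (E): $Gx=\mathbb{E}_{\zeta\sim\mathbb P}[\mathbf G(x,\zeta)]$; (F) $Gx=\frac1n\sum_iG_ix$ is the special case with $\zeta$ uniform on $\{1,\dots,n\}$. $G_{\mathcal B}x:=\frac1{|\mathcal B|}\sum_{\zeta\in\mathcal B}\mathbf G(x,\zeta)$; an i.i.d. mini-batch of size $b$ is $b$ samples drawn i.i.d. from $\mathbb P$ independently of the past. Assumption A: (b) $\mathbb{E}_\zeta\|\mathbf G(x,\zeta)-Gx\|^2\le\sigma^2$ for all $x$; (c) $\mathbb{E}_\zeta\|\mathbf G(x,\zeta)-\mathbf G(y,\zeta)\|^2\le L^2\|x-y\|^2$ for all $x,y$. Scheme (VrFRBS): stepsize $\eta>0$, $x^0$, $x^{-2}=x^{-1}=x^0$, $\xi^0\in Tx^0$; for $k\ge0$: $S^k:=2Gx^k-Gx^{k-1}$, estimator $\widetilde S^k$, $x^{k+1}\in J_{\eta T}(x^k-\eta\widetilde S^k)$, $\xi^{k+1}:=\eta^{-1}(x^k-\eta\widetilde S^k-x^{k+1})\in Tx^{k+1}$; $e^k:=\widetilde S^k-S^k$ (so $e^{-1}=0$ with $S^{-1}:=Gx^0$). $\mathcal F_k$: $\sigma$-algebra of all randomness up to iteration $k$; $\mathbb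 E_k[\cdot]:=\mathbb E[\cdot\mid\mathcal F_k]$. Class (B) (biased variance-reduced): there exist nonnegative random variables $\Delta_k$ ($\Delta_{-1}:=0$), constants $\tau,\kappa\in(0,1]$, $\Theta,\hat\Theta\ge0$, nonnegative $\{\delta_k\}$, such that with $e^{-1}:=0$, a.s. for all $k\ge0$: $\mathbb E_k[e^k]=(1-\tau)e^{k-1}$; $\mathbb E_k\|e^k\|^2\le\mathbb E_k[\Delta_k]$; $\mathbb E_k[\Delta_k]\le(1-\kappa)\Delta_{k-1}+\Theta\|x^k-x^{k-1}\|^2+\hat\Theta\|x^{k-1}-x^{k-2}\|^2+\delta_k$. *)

From HB Require Import structures.
From mathcomp Require Import all_boot all_order all_algebra.
From mathcomp Require Import all_classical all_reals all_analysis.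

Set Implicit Arguments.
Unset Strict Implicit.
Unset Printing Implicit Defensive.

Import Order.TTheory GRing.Theory Num.Theory.
Local Open Scope classical_set_scope.
Local Open Scope ring_scope.

Definition sqnorm (R : realType) (p : nat) (v : 'rV[R]_p) : R :=
  \sum_(j < p) (v ord0 j) ^+ 2.

Definition batch_avg (R : realType) (p : nat) (Z : Type) (b : nat)
  (Gs : 'rV[R]_p -> Z -> 'rV[R]_p) (B : 'I_b -> Z) (x : 'rV[R]_p) : 'rV[R]_p :=
  (b%:R)^-1 *: \sum_(i < b) Gs x (B i).

(* The estimator at step k, as a function of the fresh randomness w:
   coin w = true  <-> the "probability p" branch (Stilde^k = Sbar^k);
   coin w = false <-> the recursive branch. *)
Definition vr_estimator (R : realType) (p : nat) (T Z : Type) (b : nat)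
  (Gs : 'rV[R]_p -> Z -> 'rV[R]_p)
  (coin : T -> bool) (batch : 'I_b -> T -> Z) (Sbar : T -> 'rV[R]_p)
  (Sprev xk xk1 xk2 : 'rV[R]_p) (w : T) : 'rV[R]_p :=
  if coin w then Sbar w
  else Sprev + 2%:R *: batch_avg Gs (fun i => batch i w) xk
             - 3%:R *: batch_avg Gs (fun i => batch i w) xk1
             + batch_avg Gs (fun i => batch i w) xk2.

Definition indep_coin_batch d dZ (T : measurableType d) (Z : measurableType dZ)
  (R : realType) (P : probability T R) (b : nat)
  (coin : T -> bool) (batch : 'I_b -> T -> Z) : Prop :=
  forall (B : set bool) (A : 'I_b -> set Z), (forall i, measurable (A i)) ->
    P (coin @^-1` B `&` \bigcap_i (batch i @^-1` A i))
    = (P (coin @^-1` B) * \prod_(i < b) P (batch i @^-1` A i))%E.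

(* Independence of the coin and the random vector Sbar (product rule on the
   pi-system of measurable rectangles generating the sigma-algebra of Sbar). *)
Definition indep_coin_vec d (T : measurableType d) (R : realType)
  (P : probability T R) (p : nat) (coin : T -> bool) (V : T -> 'rV[R]_p) : Prop :=
  forall (B : set bool) (A : 'I_p -> set R), (forall j, measurable (A j)) ->
    P (coin @^-1` B `&` \bigcap_j ((fun w => V w ord0 j) @^-1` A j))
    = (P (coin @^-1` B) * P (\bigcap_j ((fun w => V w ord0 j) @^-1` A j)))%E.

(* One step (index k) of the class (B) conditions, with the conditional
   expectation E_k realised as the expectation over the fresh randomness of
   iteration k, all F_k-measurable quantities (x^k, x^{k-1}, x^{k-2},
   e^{k-1}, Delta_{k-1}) being frozen. *)
Local Open Scope ereal_scope.
Definition classB_step d (T : measurableType d) (R : realType)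
  (P : probability T R) (p : nat)
  (e : T -> 'rV[R]_p) (Delta : T -> R) (eprev : 'rV[R]_p) (Dprev : R)
  (xk xk1 xk2 : 'rV[R]_p) (tau kappa Theta Thetahat delta : R) : Prop :=
  [/\ (0 < tau <= 1)%R, (0 < kappa <= 1)%R, (0 <= Theta)%R, (0 <= Thetahat)%R & (0 <= delta)%R] /\
  [/\ (forall w, 0 <= Delta w)%R /\ (0 <= Dprev)%R,
      (forall j, 'E_P[fun w => e w ord0 j] = ((1 - tau) * eprev ord0 j)%R%:E),
      ('E_P[fun w => sqnorm (e w)] <= 'E_P[Delta])%E &
      ('E_P[Delta] <= ((1 - kappa) * Dprev + Theta * sqnorm (xk - xk1)
                      + Thetahat * sqnorm (xk1 - xk2) + delta)%R%:E)%E].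

(* Write e for the error of the estimator with respect to S^k.  With probability p
   the coin resets e to Sbar^k - S^k, which is centred with second moment at most
   sigma_k^2; otherwise e = e^{k-1} + (1/b) sum_i v(zeta_i), where
   v(zeta) = 2G(x^k,zeta) - 3G(x^{k-1},zeta) + G(x^{k-2},zeta) minus its mean, and the
   zeta_i are i.i.d. and independent of the coin.  Hence E_k e = (1-p) e^{k-1} and,
   the cross terms of the mini-batch being centred and independent,
   E_k ||e||^2 = p E||Sbar^k - S^k||^2 + (1-p) (||e^{k-1}||^2 + Var v / b).
   Writing v + mean = 2(G(x^k) - G(x^{k-1})) - (G(x^{k-1}) - G(x^{k-2})) along zeta,
   Var v <= 8 L^2 ||x^k - x^{k-1}||^2 + 2 L^2 ||x^{k-1} - x^{k-2}||^2 by A(c).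
   Conditional expectations are integrals restricted to the two coin events, computed
   from the laws of the samples on these events. *)

From HB Require Import structures.
From mathcomp Require Import all_boot all_order all_algebra.
From mathcomp Require Import all_classical all_reals all_analysis.
From mathcomp Require Import measurable_realfun ring lra.
Import Order.TTheory GRing.Theory Num.Theory.
Set Implicit Arguments.
Unset Strict Implicit.
Unset Printing Implicit Defensive.
Local Open Scope classical_set_scope.
Local Open Scope ring_scope.
Local Open Scope ereal_scope.

Section integral_law.
Context d (T : measurableType d) (R : realType) (P : {measure set T -> \bar R}).

Lemma integral_mrestr (D : set T) (mD : measurable D) (F : T -> \bar R) :
  measurable_fun setT F -> \int[P]_(w in D) F w = \int[mrestr P mD]_w F w.
Proof.
move=> mF; have -> : [set: T] = D `|` ~` D by rewrite setUv.
rewrite integral_setU //; last 3 first.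
- exact: measurableC.
- by rewrite setUv.
- by rewrite disj_set2E setICr.
rewrite (@null_set_integral _ _ _ (mrestr P mD) (~` D)) //; last 3 first.
- exact: measurableC.
- exact: measurable_funS mF.
- by change (P (~` D `&` D) = 0); rewrite setICl measure0.
rewrite adde0; apply: eq_measure_integral => A mA AD.
by change (P A = P (A `&` D)); rewrite setIidl.
Qed.

Context d' (Y : measurableType d') (X : T -> Y) (mX : measurable_fun setT X).
Context (m : {measure set Y -> \bar R}) (D : set T) (mD : measurable D).
Context (c : R) (c0 : (0 <= c)%R).
Hypothesis lawX : forall A, measurable A -> P (D `&` X @^-1` A) = c%:E * m A.

Lemma ge0_integral_law (f : Y -> \bar R) : measurable_fun setT f ->
  (forall y, 0 <= f y) -> \int[P]_(w in D) f (X w) = c%:E * \int[m]_y f y.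
Proof.
move=> mf f0; rewrite integral_mrestr //; last exact: measurableT_comp.
have := @ge0_integral_pushforward _ _ _ _ _ X mX (mrestr P mD) setT f measurableT
  mf (fun y _ => f0 y).
rewrite preimage_setT => <-.
transitivity (\int[mscale (NngNum c0) m]_y f y); last by rewrite ge0_integral_mscale.
apply: eq_measure_integral => A mA _.
by change (P (X @^-1` A `&` D) = c%:E * m A); rewrite setIC lawX.
Qed.

Lemma integrable_law (f : Y -> R) : m.-integrable setT (EFin \o f) ->
  P.-integrable D (fun w => (f (X w))%:E).
Proof.
move=> /integrableP[mf fi]; apply/integrableP; split.
  exact/measurable_funTS/(measurableT_comp mf mX).
rewrite (ge0_integral_law (f := fun y => `|(f y)%:E|)) //.
- by apply: lte_mul_pinfty.
- exact: measurableT_comp.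
Qed.

Lemma integral_law (f : Y -> R) : m.-integrable setT (EFin \o f) ->
  \int[P]_(w in D) (f (X w))%:E = c%:E * \int[m]_y (f y)%:E.
Proof.
move=> fi; have mf : measurable_fun setT (EFin \o f) by case/integrableP: fi.
rewrite integralE [in RHS]integralE.
rewrite -[fun w => (f (X w))%:E]/((EFin \o f) \o X) funepos_comp funeneg_comp.
rewrite (ge0_integral_law (f := (EFin \o f)^\+)) //; last exact: measurable_funepos.
rewrite (ge0_integral_law (f := (EFin \o f)^\-)) //; last exact: measurable_funeneg.
by rewrite [RHS]muleBr //; exact: (integrable_add_def measurableT fi).
Qed.

End integral_law.

Section restr_indep.
Context d (T : measurableType d) (R : realType) (P : {measure set T -> \bar R}).
Context d' (Y : measurableType d') (X : T -> Y) (mX : measurable_fun setT X).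
Context (D : set T) (mD : measurable D) (c : R) (c0 : (0 <= c)%R).
Hypothesis indepX : forall A, measurable A ->
  P (D `&` X @^-1` A) = c%:E * P (X @^-1` A).

Let lawX A : measurable A -> P (D `&` X @^-1` A) = c%:E * pushforward P X A.
Proof. exact: indepX. Qed.

Lemma ge0_integral_restr_indep (f : Y -> \bar R) : measurable_fun setT f ->
  (forall y, 0 <= f y) -> \int[P]_(w in D) f (X w) = c%:E * \int[P]_w f (X w).
Proof.
move=> mf f0; rewrite (ge0_integral_law mX mD c0 lawX) // ge0_integral_pushforward //.
Qed.

Lemma integral_restr_indep (f : Y -> R) : measurable_fun setT f ->
  P.-integrable setT (fun w => (f (X w))%:E) ->
  \int[P]_(w in D) (f (X w))%:E = c%:E * \int[P]_w (f (X w))%:E.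
Proof.
move=> mf fi; have mEf : measurable_fun setT (EFin \o f) by exact/measurable_EFinP.
have fXi : P.-integrable (X @^-1` setT) ((EFin \o f) \o X) by rewrite preimage_setT.
rewrite (integral_law mX mD c0 lawX); last exact: integrable_pushforward.
by rewrite integral_pushforward // preimage_setT.
Qed.

End restr_indep.

Section integral_prod_mul.
Context d1 d2 (T1 : measurableType d1) (T2 : measurableType d2) (R : realType).
Context (m1 : probability T1 R) (m2 : probability T2 R).

Lemma ge0_integral_prod_mul (f : T1 -> R) (g : T2 -> R) :
  measurable_fun setT f -> measurable_fun setT g ->
  (forall x, 0 <= f x)%R -> (forall y, 0 <= g y)%R ->
  \int[m1 \x m2]_z (f z.1 * g z.2)%:E = \int[m1]_x (f x)%:E * \int[m2]_y (g y)%:E.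
Proof.
move=> mf mg f0 g0.
have mfg : measurable_fun setT (fun z : T1 * T2 => (f z.1 * g z.2)%:E).
  apply/measurable_EFinP; apply: measurable_funM.
  - exact: measurableT_comp mf measurable_fst.
  - exact: measurableT_comp mg measurable_snd.
rewrite fubini_tonelli1 //; last by move=> z; rewrite lee_fin mulr_ge0.
rewrite /fubini_F /= -ge0_integralZr //; last 3 first.
- exact/measurable_EFinP.
- by move=> x _; rewrite lee_fin.
- by apply: integral_ge0 => y _; rewrite lee_fin.
apply: eq_integral => x _; under eq_integral do rewrite EFinM.
rewrite ge0_integralZl_EFin //.
- by move=> y _; rewrite lee_fin.
- exact/measurable_EFinP.
Qed.

Context (f : T1 -> R) (g : T2 -> R).
Hypotheses (fi : m1.-integrable setT (EFin \o f)) (gi : m2.-integrable setT (EFin \o g)).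

Lemma integrable_prod_mul :
  (m1 \x m2).-integrable setT (fun z => (f z.1 * g z.2)%:E).
Proof.
have [mf fioo] := integrableP _ _ _ fi; have [mg gioo] := integrableP _ _ _ gi.
move/measurable_EFinP in mf; move/measurable_EFinP in mg.
apply/integrableP; split.
  apply/measurable_EFinP; apply: measurable_funM.
  - exact: measurableT_comp mf measurable_fst.
  - exact: measurableT_comp mg measurable_snd.
under eq_integral do rewrite /= normrM.
rewrite (ge0_integral_prod_mul (f := fun x => `|f x|%R) (g := fun y => `|g y|%R)) //.
- by rewrite lte_mul_pinfty ?integral_ge0 // ge0_fin_numE ?integral_ge0.
- exact: measurableT_comp.
- exact: measurableT_comp.
Qed.

Lemma integral_prod_mul :
  \int[m1 \x m2]_z (f z.1 * g z.2)%:E = \int[m1]_x (f x)%:E * \int[m2]_y (g y)%:E.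
Proof.
rewrite -integral12_prod_meas1; last exact: integrable_prod_mul.
have gfin : \int[m2]_y (g y)%:E \is a fin_num by exact: integrable_fin_num.
rewrite -(fineK gfin) -integralZr //; apply: eq_integral => x _.
rewrite /fubini_F /=; under eq_integral do rewrite EFinM.
by rewrite integralZl // fineK.
Qed.

End integral_prod_mul.

Section pair_law.
Context d (T : measurableType d) (R : realType) (P : probability T R).
Context dZ (Z : measurableType dZ) (mu : probability Z R).
Context (X Y : T -> Z) (mX : measurable_fun setT X) (mY : measurable_fun setT Y).
Context (D : set T) (mD : measurable D) (c : R) (c0 : (0 <= c)%R).
Hypothesis lawXY : forall A B, measurable A -> measurable B ->
  P (D `&` X @^-1` A `&` Y @^-1` B) = c%:E * (mu A * mu B).

Let XY w := (X w, Y w).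
Let mXY : measurable_fun setT XY. Proof. exact: measurable_fun_pair. Qed.

(* Both sides are finite measures agreeing on the pi-system of rectangles. *)
Lemma pair_law A : measurable A -> P (D `&` XY @^-1` A) = c%:E * (mu \x mu) A.
Proof.
move=> mA; rewrite setIC.
change (pushforward (mrestr P mD) XY A = mscale (NngNum c0) (mu \x mu) A).
apply: (@measure_unique _ R _ [set A `*` B | A in measurable & B in measurable]
  (fun _ => setT) (measurable_prod_measurableType Z Z)) => //.
- move=> _ _ [A1 mA1 [B1 mB1 <-]] [A2 mA2 [B2 mB2 <-]].
  rewrite -setXI; exists (A1 `&` A2); first exact: measurableI.
  by exists (B1 `&` B2) => //; exact: measurableI.
- by move=> _; exists setT => //; exists setT => //; exact: setXTT.
- by rewrite bigcup_const.
- move=> _ [A1 mA1 [B1 mB1 <-]].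
  change (P (XY @^-1` (A1 `*` B1) `&` D) = c%:E * (mu \x mu) (A1 `*` B1)).
  rewrite product_measure1E // -lawXY // setIC setIA.
  by congr (P _); apply/seteqP; split => w /=; case.
- move=> _; change (P (XY @^-1` setT `&` D) < +oo).
  by rewrite (le_lt_trans (probability_le1 _ _)) ?ltry //;
    apply: measurableI => //; rewrite preimage_setT.
Qed.

Context (f g : Z -> R).
Hypotheses (fi : mu.-integrable setT (EFin \o f)) (gi : mu.-integrable setT (EFin \o g)).

Lemma integrable_law_mul : P.-integrable D (fun w => (f (X w) * g (Y w))%:E).
Proof.
exact: (integrable_law mXY mD c0 pair_law (f := fun z => f z.1 * g z.2)%R)
  (integrable_prod_mul fi gi).
Qed.

Lemma integral_law_mul : \int[P]_(w in D) (f (X w) * g (Y w))%:E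
  = c%:E * (\int[mu]_z (f z)%:E * \int[mu]_z (g z)%:E).
Proof.
rewrite -integral_prod_mul //.
exact: (integral_law mXY mD c0 pair_law (f := fun z => f z.1 * g z.2)%R)
  (integrable_prod_mul fi gi).
Qed.

End pair_law.

Section Lfun2.
Context d (T : measurableType d) (R : realType).

Lemma sqr_integrable_Lfun2 (mu : {measure set T -> \bar R}) (f : T -> R) :
  measurable_fun setT f -> mu.-integrable setT (fun x => (f x ^+ 2)%:E) ->
  f \in Lfun mu 2%:E.
Proof.
move=> mf /integrableP[_ fi]; rewrite inE; apply/andP; split; rewrite inE //=.
rewrite /finite_norm unlock poweR_lty //; apply: le_lt_trans fi.
apply: ge0_le_integral => //.
- by move=> x _; rewrite lee_fin powR_ge0.
- apply/measurable_EFinP.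
  apply: (@measurableT_comp _ _ _ _ _ _ (fun x : R => x `^ 2)%R) => //.
  exact: measurableT_comp.
- by apply: measurableT_comp => //; apply/measurable_EFinP; exact: measurable_funX.
- by move=> x _; rewrite /= lee_fin powR_mulrn ?normr_ge0 // normrX.
Qed.

Lemma Lfun2_integrable (P : probability T R) (f : T -> R) :
  f \in Lfun P 2%:E -> P.-integrable setT (EFin \o f).
Proof. by move=> f2; apply/Lfun1_integrable/Lfun_subset12 => //; exact: fin_num_measure. Qed.

Lemma variance_le_expectation_sqr (P : probability T R) (f : T -> R) :
  f \in Lfun P 2%:E -> 'V_P[f] <= 'E_P[fun x => (f x ^+ 2)%R].
Proof.
by move=> f2; rewrite varianceE // -[leRHS]sube0 leeB ?sqre_ge0.
Qed.

End Lfun2.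

Section minibatch.
Context d (T : measurableType d) (R : realType) (P : probability T R).
Context dZ (Z : measurableType dZ) (mu : probability Z R).
Context (b : nat) (b0 : (0 < b)%N) (batch : 'I_b -> T -> Z).
Context (D : set T) (mD : measurable D) (c : R) (c0 : (0 <= c)%R).
Hypothesis mbatch : forall i, measurable_fun setT (batch i).
Hypothesis batch_law : forall i A, measurable A ->
  P (D `&` batch i @^-1` A) = c%:E * mu A.
Hypothesis batch_pair_law : forall i k A B, i != k -> measurable A -> measurable B ->
  P (D `&` batch i @^-1` A `&` batch k @^-1` B) = c%:E * (mu A * mu B).
Context (f : Z -> R) (f2 : f \in Lfun mu 2%:E) (f_mean0 : 'E_mu[f] = 0).

Let fi : mu.-integrable setT (EFin \o f). Proof. exact: Lfun2_integrable. Qed.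

Let f_integral0 : \int[mu]_z (f z)%:E = 0. Proof. by rewrite -f_mean0 unlock. Qed.

Let integrable_batch i : P.-integrable D (fun w => (f (batch i w))%:E).
Proof. exact: (integrable_law (mbatch i) mD c0 (batch_law i) fi). Qed.

Let integral_batch i : \int[P]_(w in D) (f (batch i w))%:E = 0.
Proof. by rewrite (integral_law (mbatch i) mD c0 (batch_law i)) // f_integral0 mule0. Qed.

Let integrable_cross i k :
  P.-integrable D (fun w => (f (batch i w) * f (batch k w))%:E).
Proof.
have [<-|ik] := eqVneq i k; last first.
  exact: (integrable_law_mul (mbatch i) (mbatch k) mD c0 (fun A B => batch_pair_law ik) fi fi).
exact: (integrable_law (mbatch i) mD c0 (batch_law i) (Lfun2_integrable_sqr f2)).
Qed.

Let integral_cross i k :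
  \int[P]_(w in D) (f (batch i w) * f (batch k w))%:E
  = (if i == k then c * fine 'V_mu[f] else 0)%:E.
Proof.
have [<-|ik] := eqVneq i k; last first.
  by rewrite (integral_law_mul (mbatch i) (mbatch k) mD c0 (fun A B => batch_pair_law ik))
    // f_integral0 mul0e mule0.
rewrite (integral_law (mbatch i) mD c0 (batch_law i) (f := fun z => f z ^+ 2)%R);
  last exact: Lfun2_integrable_sqr.
rewrite varianceE // f_mean0 expe2 mule0 sube0 EFinM fineK //.
- by rewrite unlock.
- by rewrite unlock; apply: integrable_fin_num => //; exact: Lfun2_integrable_sqr.
Qed.

Let prob_D : (P : {measure set T -> \bar R}) D = c%:E.
Proof.
by have := batch_law (Ordinal b0) measurableT; rewrite preimage_setT setIT probability_setT mule1.
Qed.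

Let integrable_const (a : R) : P.-integrable D (fun _ => a%:E).
Proof. exact: (finite_measure_integrable_cst _ _ mD). Qed.

Let integral_const (a : R) : \int[P]_(w in D) a%:E = (c * a)%:E.
Proof. by rewrite (integral_cst P mD a%:E) prob_D -EFinM mulrC. Qed.

Let integrable_sum_batch :
  P.-integrable D (fun w => \sum_(i < b) (f (batch i w))%:E).
Proof. by apply: (integrable_sum mD) => i _; exact: integrable_batch. Qed.

Let integral_sum_batch : \int[P]_(w in D) \sum_(i < b) (f (batch i w))%:E = 0.
Proof. by rewrite integral_sum // big1 // => i _; exact: integral_batch. Qed.

Let integrable_sum_cross : P.-integrable D
  (fun w => \sum_(i < b) \sum_(k < b) (f (batch i w) * f (batch k w))%:E).
Proof.
apply: (integrable_sum mD) => i _; apply: (integrable_sum mD) => k _.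
exact: integrable_cross.
Qed.

(* Only the diagonal terms survive: the cross terms of a centred i.i.d. batch vanish. *)
Let integral_sum_cross :
  \int[P]_(w in D) \sum_(i < b) \sum_(k < b) (f (batch i w) * f (batch k w))%:E
  = (c * fine 'V_mu[f] *+ b)%:E.
Proof.
rewrite integral_sum //; last by move=> i; apply: (integrable_sum mD) => k _.
under eq_bigr => i _.
  rewrite integral_sum //.
  under eq_bigr => k _ do rewrite integral_cross.
  rewrite sumEFin (bigD1 i) //= eqxx big1 ?addr0; last first.
    by move=> k /negbTE; rewrite eq_sym => ->.
  over.
by rewrite sumEFin sumr_const card_ord.
Qed.

Lemma minibatch_mean a :
  \int[P]_(w in D) (a + b%:R^-1 * \sum_(i < b) f (batch i w))%:E = (c * a)%:E.
Proof.
under eq_integral do rewrite EFinD EFinM -sumEFin.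
rewrite integralD //; last exact: integrableZl.
by rewrite integralZl // integral_sum_batch mule0 adde0 integral_const.
Qed.

Lemma minibatch_sqr a :
  \int[P]_(w in D) ((a + b%:R^-1 * \sum_(i < b) f (batch i w)) ^+ 2)%:E
  = (c * (a ^+ 2 + b%:R^-1 * fine 'V_mu[f]))%:E.
Proof.
have bN0 : (b%:R != 0 :> R)%R by rewrite pnatr_eq0 -lt0n.
have expand w : ((a + b%:R^-1 * \sum_(i < b) f (batch i w)) ^+ 2)%:E
    = (a ^+ 2)%:E + (2 * a / b%:R)%:E * \sum_(i < b) (f (batch i w))%:E
      + (b%:R ^- 2)%:E * \sum_(i < b) \sum_(k < b) (f (batch i w) * f (batch k w))%:E.
  rewrite [X in _ + _ * X](eq_bigr (fun i => (\sum_(k < b) f (batch i w) * f (batch k w))%:E));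
    last by move=> i _; rewrite sumEFin.
  rewrite !sumEFin -!EFinM -!EFinD; congr EFin.
  by rewrite -big_distrlr /=; field.
under eq_integral do rewrite expand.
rewrite integralD //; last 2 first.
- by apply: integrableD => //; exact: integrableZl.
- exact: integrableZl.
rewrite integralD //; last exact: integrableZl.
rewrite !integralZl // integral_sum_batch integral_sum_cross mule0 adde0 integral_const.
by rewrite -EFinM -EFinD -mulr_natr; congr EFin; field.
Qed.

End minibatch.

Section sqnorm.
Context d (T : measurableType d) (R : realType).

Lemma sqnorm_ge0 (p : nat) (v : 'rV[R]_p) : (0 <= sqnorm v)%R.
Proof. by apply: sumr_ge0 => j _; exact: sqr_ge0. Qed.

Lemma measurable_sqnorm (p : nat) (F : T -> 'rV[R]_p) :
  (forall j, measurable_fun setT (fun w => F w ord0 j)) ->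
  measurable_fun setT (fun w => sqnorm (F w)).
Proof.
move=> mF; apply: (measurable_sum _ (h := fun j w => F w ord0 j ^+ 2)%R) => j.
exact: measurable_funX.
Qed.

Lemma Lfun2_coord (P : probability T R) (p : nat) (F : T -> 'rV[R]_p) :
  (forall j, measurable_fun setT (fun w => F w ord0 j)) ->
  'E_P[fun w => sqnorm (F w)] < +oo ->
  forall j, (fun w => F w ord0 j) \in Lfun P 2%:E.
Proof.
move=> mF Foo j; apply: sqr_integrable_Lfun2 => //.
have Fi : P.-integrable setT (fun w => (sqnorm (F w))%:E).
  apply/integrableP; split; first exact/measurable_EFinP/measurable_sqnorm.
  by under eq_integral do rewrite gee0_abs ?lee_fin ?sqnorm_ge0 //; move: Foo; rewrite unlock.
apply: le_integrable Fi => //.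
  by apply/measurable_EFinP; exact: measurable_funX.
move=> w _; rewrite !gee0_abs ?lee_fin ?sqnorm_ge0 ?sqr_ge0 //.
by rewrite /sqnorm (bigD1 j) //= lerDl; apply: sumr_ge0 => k _; exact: sqr_ge0.
Qed.

End sqnorm.

Section coin_independence.
Context d (T : measurableType d) (R : realType) (P : probability T R).

Lemma bigcap_setT_except1 (n : nat) (F : 'I_n -> set T) i :
  (forall k, k != i -> F k = setT) -> \bigcap_k F k = F i.
Proof.
move=> FT; apply/seteqP; split => [w /(_ i I) //|w Fiw k _].
by have [->//|ki] := eqVneq k i; rewrite FT.
Qed.

Lemma bigcap_setT_except2 (n : nat) (F : 'I_n -> set T) i j : i != j ->
  (forall k, k != i -> k != j -> F k = setT) -> \bigcap_k F k = F i `&` F j.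
Proof.
move=> ij FT; apply/seteqP; split => [w Fw|w [Fiw Fjw] k _]; first by split; exact: Fw.
by have [->//|ki] := eqVneq k i; have [->//|kj] := eqVneq k j; rewrite FT.
Qed.

Context dZ (Z : measurableType dZ) (mu : probability Z R) (b : nat).
Context (coin : T -> bool) (batch : 'I_b -> T -> Z).
Hypothesis indep : indep_coin_batch P coin batch.
Hypothesis batch_law : forall i A, measurable A -> P (batch i @^-1` A) = mu A.

Lemma indep_coin_batch1 B i A : measurable A ->
  P (coin @^-1` B `&` batch i @^-1` A) = P (coin @^-1` B) * mu A.
Proof.
move=> mA; have := @indep B (fun k => if k == i then A else setT).
rewrite (bigcap_setT_except1 (i := i)); last by move=> k /negbTE ->; rewrite preimage_setT.
rewrite eqxx => ->; last by move=> k; case: ifP.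
rewrite (bigD1 i) //= eqxx big1 ?mule1 ?batch_law //.
by move=> k /negbTE ->; rewrite preimage_setT probability_setT.
Qed.

Lemma indep_coin_batch2 B i j A A' : i != j -> measurable A -> measurable A' ->
  P (coin @^-1` B `&` batch i @^-1` A `&` batch j @^-1` A')
  = P (coin @^-1` B) * (mu A * mu A').
Proof.
move=> ij mA mA'; have ji : (j == i) = false by rewrite eq_sym; exact: negbTE.
have := @indep B (fun k => if k == i then A else if k == j then A' else setT).
rewrite (bigcap_setT_except2 (i := i) (j := j)) //; last first.
  by move=> k /negbTE -> /negbTE ->; rewrite preimage_setT.
rewrite eqxx ji eqxx setIA => ->; last by move=> k; case: ifP => //; case: ifP.
rewrite (bigD1 i) //= eqxx (bigD1 j) /=; last by rewrite ji.
rewrite ji eqxx big1 ?mule1 ?batch_law //.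
by move=> k /andP[/negbTE -> /negbTE ->]; rewrite preimage_setT probability_setT.
Qed.

End coin_independence.

Lemma indep_coin_vec_coord d (T : measurableType d) (R : realType)
  (P : probability T R) (p : nat) (coin : T -> bool) (V : T -> 'rV[R]_p) :
  indep_coin_vec P coin V -> forall B j A, measurable A ->
  P (coin @^-1` B `&` (fun w => V w ord0 j) @^-1` A)
  = P (coin @^-1` B) * P ((fun w => V w ord0 j) @^-1` A).
Proof.
move=> indep B j A mA; have := indep B (fun k => if k == j then A else setT).
rewrite (bigcap_setT_except1 (i := j)); last by move=> k /negbTE ->; rewrite preimage_setT.
by rewrite eqxx => ->// k; case: ifP.
Qed.

Section vr_estimator.
Context (R : realType) (p : nat).
Context (dZ : measure_display) (Z : measurableType dZ) (mu : probability Z R).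
Context (Gs : 'rV[R]_p -> Z -> 'rV[R]_p) (G : 'rV[R]_p -> 'rV[R]_p) (sigma L : R).
Hypothesis HGs_meas : forall x j, measurable_fun setT (fun z => Gs x z ord0 j).
Hypothesis HG : forall x j, (G x ord0 j)%:E = 'E_mu[fun z => Gs x z ord0 j].
Hypothesis HAb : forall x, 'E_mu[fun z => sqnorm (Gs x z - G x)] <= (sigma ^+ 2)%:E.
Hypothesis HAc : forall x y,
  'E_mu[fun z => sqnorm (Gs x z - Gs y z)] <= (L ^+ 2 * sqnorm (x - y))%:E.
Context (pp : R) (b : nat) (Hpp : (0 < pp <= 1)%R) (Hb : (0 < b)%N).
Context (xk xk1 xk2 Sprev : 'rV[R]_p) (sigmak : R).
Context (d : measure_display) (T : measurableType d) (P : probability T R).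
Context (coin : T -> bool) (batch : 'I_b -> T -> Z) (Sbar : T -> 'rV[R]_p).
Hypothesis Hcoin_meas : measurable_fun setT coin.
Hypothesis Hcoin_law : P (coin @^-1` [set true]) = pp%:E.
Hypothesis Hbatch_meas : forall i, measurable_fun setT (batch i).
Hypothesis Hbatch_law : forall i (A : set Z), measurable A -> P (batch i @^-1` A) = mu A.
Hypothesis Hindep_batch : indep_coin_batch P coin batch.
Hypothesis HSbar_meas : forall j, measurable_fun setT (fun w => Sbar w ord0 j).
Hypothesis Hindep_Sbar : indep_coin_vec P coin Sbar.
Hypothesis HSbar_mean : forall j,
  'E_P[fun w => Sbar w ord0 j] = ((2%:R *: G xk - G xk1) ord0 j)%:E.
Hypothesis HSbar_var :
  'E_P[fun w => sqnorm (Sbar w - (2%:R *: G xk - G xk1))] <= (sigmak ^+ 2)%:E.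

Let Sk := (2%:R *: G xk - G xk1)%R.
Let eprev := (Sprev - (2%:R *: G xk1 - G xk2))%R.
Let e w := (vr_estimator Gs coin batch Sbar Sprev xk xk1 xk2 w - Sk)%R.

(* [incr j] is coordinate [j] of 2G(x^k,.) - 3G(x^{k-1},.) + G(x^{k-2},.), written with
   [\o*] and [\+] so that the closure lemmas of [Lfun] and of ['E] apply verbatim. *)
Let Gsc x j : Z -> R := fun z => Gs x z ord0 j.
Let incr j : Z -> R := (2 \o* Gsc xk j \+ (-3) \o* Gsc xk1 j \+ Gsc xk2 j)%R.
Let incr_mean j := (2 * G xk ord0 j + -3 * G xk1 ord0 j + G xk2 ord0 j)%R.
Let centred j : Z -> R := (incr j \+ cst (- incr_mean j))%R.

Lemma error_coordE w j : e w ord0 j = if coin w then (Sbar w ord0 j - Sk ord0 j)%R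
  else (eprev ord0 j + b%:R^-1 * \sum_(i < b) centred j (batch i w))%R.
Proof.
rewrite /e /vr_estimator; case: (coin w); rewrite !mxE //.
have bN0 : (b%:R != 0 :> R)%R by rewrite pnatr_eq0 -lt0n.
rewrite /batch_avg !summxE /centred /incr /incr_mean /Gsc /=.
rewrite !big_split /= -!mulr_suml sumr_const card_ord -[(- _ *+ b)%R]mulr_natr.
by field.
Qed.

(* Kept in context: the closure instances of [Lfun mu 2%:E] are keyed on this proof. *)
Let one_le2 : 1 <= 2%:E :> \bar R. Proof. by rewrite lee1n. Qed.

Let L1 (f : Z -> R) : f \in Lfun mu 2%:E -> f \in Lfun mu 1.
Proof. by apply: Lfun_subset12; exact: fin_num_measure. Qed.

Let Gs_Lfun2 x j : (fun z => Gs x z ord0 j) \in Lfun mu 2%:E.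
Proof.
have mD k : measurable_fun setT (fun z => (Gs x z - G x)%R ord0 k).
  under eq_fun do rewrite !mxE.
  exact: measurable_funB (HGs_meas x k) (measurable_cst _).
have D2 := Lfun2_coord mD (le_lt_trans (HAb x) (ltry _)) j.
have -> : (fun z => Gs x z ord0 j) = ((fun z => (Gs x z - G x)%R ord0 j) \+ cst (G x ord0 j))%R.
  by apply/funext => z; rewrite /= !mxE subrK.
by rewrite rpredD // Lfun_cst.
Qed.

Let incr_Lfun2 j : incr j \in Lfun mu 2%:E.
Proof.
have scale2 a f : f \in Lfun mu 2%:E -> (a \o* f)%R \in Lfun mu 2%:E.
  by apply: Lfun_scale; rewrite ler1n.
by rewrite !rpredD //; [apply: scale2..|]; exact: Gs_Lfun2.
Qed.

Let measurable_incr j : measurable_fun setT (incr j).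
Proof. by have /sub_Lfun_mfun := incr_Lfun2 j; rewrite inE. Qed.

Let expectation_incr j : 'E_mu[incr j] = (incr_mean j)%:E.
Proof.
have G1 x : Gsc x j \in Lfun mu 1 by exact/L1/Gs_Lfun2.
have G1Z a x : (a \o* Gsc x j)%R \in Lfun mu 1 by exact: Lfun_scale.
rewrite /incr expectationD; last 2 first.
- by apply: rpredD => //; exact: G1Z.
- exact: G1.
by rewrite expectationD // !expectationZl // -!HG -!EFinM -!EFinD.
Qed.

Let centred_Lfun2 j : centred j \in Lfun mu 2%:E.
Proof. by rewrite rpredD // Lfun_cst. Qed.

Let expectation_centred j : 'E_mu[centred j] = 0.
Proof.
by rewrite expectationD ?L1 ?Lfun_cst // expectation_incr expectation_cst -EFinD subrr.
Qed.

Let variance_centred j : 'V_mu[centred j] = 'V_mu[incr j].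
Proof. exact: varianceD_cst_r. Qed.

Let C := coin @^-1` [set true].
Let Cn := coin @^-1` [set false].

Let mC : measurable C. Proof. by rewrite -[C]setTI; exact: Hcoin_meas. Qed.
Let mCn : measurable Cn. Proof. by rewrite -[Cn]setTI; exact: Hcoin_meas. Qed.

Let pp_ge0 : (0 <= pp)%R. Proof. by case/andP: Hpp => /ltW. Qed.
Let pp_compl_ge0 : (0 <= 1 - pp)%R. Proof. by case/andP: Hpp; rewrite subr_ge0. Qed.

Let prob_Cn : P Cn = (1 - pp)%:E.
Proof.
have -> : Cn = ~` C by apply/seteqP; split => w; rewrite /C /Cn /=; case: (coin w).
by rewrite probability_setC // Hcoin_law.
Qed.

Let integral_split (F : T -> \bar R) : measurable_fun setT F ->
  \int[P]_w F w = \int[P]_(w in C) F w + \int[P]_(w in Cn) F w.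
Proof.
have CU : C `|` Cn = setT.
  by apply/seteqP; split => w // _; rewrite /C /Cn /=; case: (coin w); [left|right].
move=> mF; rewrite -CU integral_setU // ?CU //.
by rewrite disj_set2E; apply/eqP/seteqP; split => w // []; rewrite /C /Cn /= => ->.
Qed.

Let Sbar_indep_C j A : measurable A ->
  P (C `&` (fun w => Sbar w ord0 j) @^-1` A)
  = pp%:E * P ((fun w => Sbar w ord0 j) @^-1` A).
Proof. by move=> mA; rewrite (indep_coin_vec_coord Hindep_Sbar) // Hcoin_law. Qed.

Let batch_law_Cn i A : measurable A -> P (Cn `&` batch i @^-1` A) = (1 - pp)%:E * mu A.
Proof. by move=> mA; rewrite (indep_coin_batch1 Hindep_batch Hbatch_law) // prob_Cn. Qed.

Let batch_pair_law_Cn i k A B : i != k -> measurable A -> measurable B ->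
  P (Cn `&` batch i @^-1` A `&` batch k @^-1` B) = (1 - pp)%:E * (mu A * mu B).
Proof. by move=> ik mA mB; rewrite (indep_coin_batch2 Hindep_batch Hbatch_law) // prob_Cn. Qed.

Let measurable_minibatch_error j : measurable_fun setT
  (fun w => eprev ord0 j + b%:R^-1 * \sum_(i < b) centred j (batch i w))%R.
Proof.
apply: measurable_funD; first exact: measurable_cst.
apply: measurable_funM; first exact: measurable_cst.
apply: (measurable_sum _ (h := fun i w => centred j (batch i w))) => i.
apply: measurableT_comp (Hbatch_meas i).
by have /sub_Lfun_mfun := centred_Lfun2 j; rewrite inE.
Qed.

Let measurable_error_coord j : measurable_fun setT (fun w => e w ord0 j).
Proof.
have -> : (fun w => e w ord0 j) = (fun w => if coin w then (Sbar w ord0 j - Sk ord0 j)%R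
    else (eprev ord0 j + b%:R^-1 * \sum_(i < b) centred j (batch i w))%R).
  by apply/funext => w; rewrite error_coordE.
apply: measurable_fun_ifT => //.
exact: measurable_funB (HSbar_meas j) (measurable_cst _).
Qed.

Let Sbar_dev_Lfun2 j : (fun w => Sbar w ord0 j - Sk ord0 j)%R \in Lfun P 2%:E.
Proof.
have mD k : measurable_fun setT (fun w => (Sbar w - Sk)%R ord0 k).
  under eq_fun do rewrite !mxE.
  exact: measurable_funB (HSbar_meas k) (measurable_cst _).
have -> : (fun w => Sbar w ord0 j - Sk ord0 j)%R = (fun w => (Sbar w - Sk)%R ord0 j).
  by apply/funext => w; rewrite !mxE.
exact: Lfun2_coord mD (le_lt_trans HSbar_var (ltry _)) j.
Qed.

Let integral_Sbar_dev j : \int[P]_w (Sbar w ord0 j - Sk ord0 j)%:E = 0.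
Proof.
have S2 : (fun w => Sbar w ord0 j) \in Lfun P 2%:E.
  have -> : (fun w => Sbar w ord0 j) = ((fun w => Sbar w ord0 j - Sk ord0 j) \+ cst (Sk ord0 j))%R.
    by apply/funext => w /=; rewrite subrK.
  by rewrite rpredD ?lee1n // Lfun_cst.
transitivity 'E_P[(fun w => Sbar w ord0 j) \+ cst (- Sk ord0 j)]%R; first by rewrite unlock.
rewrite expectationD ?Lfun_subset12 ?Lfun_cst ?fin_num_measure //.
by rewrite HSbar_mean expectation_cst -EFinD subrr.
Qed.

Lemma expectation_error j : 'E_P[fun w => e w ord0 j] = ((1 - pp) * eprev ord0 j)%:E.
Proof.
rewrite expectation.unlock integral_split; last exact/measurable_EFinP.
have -> : \int[P]_(w in C) (e w ord0 j)%:E = 0.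
  transitivity (\int[P]_(w in C) (Sbar w ord0 j - Sk ord0 j)%:E).
    by apply: eq_integral => w /[!inE] Cw; rewrite error_coordE Cw.
  rewrite (integral_restr_indep (HSbar_meas j) mC pp_ge0 (Sbar_indep_C j)
    (f := fun y => y - Sk ord0 j)%R); last 2 first.
  - by apply: measurable_funD => //; exact: measurable_cst.
  - exact: Lfun2_integrable.
  by rewrite integral_Sbar_dev mule0.
have -> : \int[P]_(w in Cn) (e w ord0 j)%:E
    = \int[P]_(w in Cn) (eprev ord0 j + b%:R^-1 * \sum_(i < b) centred j (batch i w))%:E.
  by apply: eq_integral => w /[!inE] Cnw; rewrite error_coordE Cnw.
by rewrite (minibatch_mean Hb mCn pp_compl_ge0 Hbatch_meas batch_law_Cn (centred_Lfun2 j))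
  ?expectation_centred // add0e.
Qed.

Lemma integral_sqnorm_error_C :
  \int[P]_(w in C) (sqnorm (e w))%:E = pp%:E * 'E_P[fun w => sqnorm (Sbar w - Sk)%R].
Proof.
have mdev j : measurable_fun setT (fun y : R => (y - Sk ord0 j) ^+ 2)%R.
  by apply/measurable_funX/measurable_funD => //; exact: measurable_cst.
transitivity (\int[P]_(w in C) \sum_(j < p) ((Sbar w ord0 j - Sk ord0 j) ^+ 2)%:E).
  apply: eq_integral => w /[!inE] Cw; rewrite sumEFin; congr EFin.
  by apply: eq_bigr => j _; rewrite error_coordE Cw.
rewrite ge0_integral_sum //; last 2 first.
- move=> j; apply/measurable_funTS/measurable_EFinP.
  exact: measurableT_comp (mdev j) (HSbar_meas j).
- by move=> j w _; rewrite lee_fin sqr_ge0.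
under eq_bigr => j _.
  rewrite (ge0_integral_restr_indep (HSbar_meas j) mC pp_ge0
    (Sbar_indep_C j) (f := fun y => ((y - Sk ord0 j) ^+ 2)%:E)); last 2 first.
  - exact/measurable_EFinP.
  - by move=> y; rewrite lee_fin sqr_ge0.
  over.
rewrite -ge0_sume_distrr; last by move=> j _; apply: integral_ge0 => w _; rewrite lee_fin sqr_ge0.
rewrite -ge0_integral_sum //; last 2 first.
- move=> j; apply/measurable_EFinP.
  exact: measurableT_comp (mdev j) (HSbar_meas j).
- by move=> j w _; rewrite lee_fin sqr_ge0.
rewrite [in RHS]unlock; congr (_ * _); apply: eq_integral => w _; rewrite sumEFin; congr EFin.
by apply: eq_bigr => j _; rewrite !mxE.
Qed.

Lemma integral_sqnorm_error_Cn : \int[P]_(w in Cn) (sqnorm (e w))%:E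
  = ((1 - pp) * (sqnorm eprev + b%:R^-1 * \sum_(j < p) fine 'V_mu[incr j]))%:E.
Proof.
transitivity (\int[P]_(w in Cn) \sum_(j < p)
    ((eprev ord0 j + b%:R^-1 * \sum_(i < b) centred j (batch i w)) ^+ 2)%:E).
  apply: eq_integral => w /[!inE] Cnw; rewrite sumEFin; congr EFin.
  by apply: eq_bigr => j _; rewrite error_coordE Cnw.
rewrite ge0_integral_sum //; last 2 first.
- move=> j; apply/measurable_funTS/measurable_EFinP.
  exact/measurable_funX/measurable_minibatch_error.
- by move=> j w _; rewrite lee_fin sqr_ge0.
under eq_bigr => j _ do rewrite (minibatch_sqr Hb mCn pp_compl_ge0 Hbatch_meas batch_law_Cn
  batch_pair_law_Cn (centred_Lfun2 j) (expectation_centred j)) variance_centred.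
rewrite sumEFin /sqnorm -mulr_sumr big_split /= -mulr_sumr.
by congr EFin; congr (_ * (_ + _)); apply: eq_bigr.
Qed.

Let measurable_sqnorm_Gs_diff x y :
  measurable_fun setT (fun z => sqnorm (Gs x z - Gs y z)%R).
Proof.
apply: measurable_sqnorm => j; under eq_fun do rewrite !mxE.
exact: measurable_funB (HGs_meas x j) (HGs_meas y j).
Qed.

Let sum_sqr_incr_le z : (\sum_(j < p) incr j z ^+ 2
  <= 8 * sqnorm (Gs xk z - Gs xk1 z) + 2 * sqnorm (Gs xk1 z - Gs xk2 z))%R.
Proof.
rewrite /sqnorm !mulr_sumr -big_split /=; apply: ler_sum => j _.
rewrite !mxE /incr /Gsc /=.
set a := (Gs xk z ord0 j - Gs xk1 z ord0 j)%R.
set c := (Gs xk1 z ord0 j - Gs xk2 z ord0 j)%R.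
have -> : (Gs xk z ord0 j * 2 + Gs xk1 z ord0 j * -3 + Gs xk2 z ord0 j = 2 * a - c)%R.
  by rewrite /a /c; ring.
(* [(2a - c)^2 + (2a + c)^2 = 8a^2 + 2c^2] *)
by have := sqr_ge0 (2 * a + c)%R; nra.
Qed.

Let integral_Gs_diff_le : \int[mu]_z
    (8 * sqnorm (Gs xk z - Gs xk1 z) + 2 * sqnorm (Gs xk1 z - Gs xk2 z))%:E
  <= (8 * L ^+ 2 * sqnorm (xk - xk1) + 2 * L ^+ 2 * sqnorm (xk1 - xk2))%:E.
Proof.
have mGs x y : measurable_fun setT (fun z => (sqnorm (Gs x z - Gs y z))%:E).
  exact/measurable_EFinP.
have sqnorm_ge0E x y z : 0 <= (sqnorm (Gs x z - Gs y z))%:E by rewrite lee_fin sqnorm_ge0.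
under eq_integral do rewrite EFinD !EFinM.
rewrite ge0_integralD //; last 4 first.
- by move=> z _; rewrite mule_ge0.
- exact: emeasurable_funM.
- by move=> z _; rewrite mule_ge0.
- exact: emeasurable_funM.
rewrite !ge0_integralZl_EFin //.
have := HAc xk xk1; have := HAc xk1 xk2; rewrite expectation.unlock => H2 H1.
apply: le_trans (leeD (lee_wpmul2l _ H1) (lee_wpmul2l _ H2)) _; rewrite ?lee_fin //.
by rewrite !mulrA.
Qed.

Lemma sum_variance_incr_le : (\sum_(j < p) fine 'V_mu[incr j]
  <= 8 * L ^+ 2 * sqnorm (xk - xk1) + 2 * L ^+ 2 * sqnorm (xk1 - xk2))%R.
Proof.
have mincr2 j : measurable_fun setT (fun z => ((incr j z) ^+ 2)%:E).
  by apply/measurable_EFinP; exact: measurable_funX (measurable_incr j).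
rewrite -lee_fin -sumEFin; under eq_bigr do rewrite fineK ?variance_fin_num //.
apply: le_trans integral_Gs_diff_le.
apply: (@le_trans _ _ (\sum_(j < p) 'E_mu[fun z => (incr j z ^+ 2)%R])).
  by apply: lee_sum => j _; exact: variance_le_expectation_sqr.
under eq_bigr do rewrite expectation.unlock.
rewrite -ge0_integral_sum //; last by move=> j z _; rewrite lee_fin sqr_ge0.
apply: ge0_le_integral => //.
- by move=> z _; apply: sume_ge0 => j _; rewrite lee_fin sqr_ge0.
- exact: emeasurable_sum.
- apply/measurable_EFinP; apply: measurable_funD; apply: measurable_funM => //;
    exact: measurable_cst.
- by move=> z _; rewrite sumEFin lee_fin sum_sqr_incr_le.
Qed.

Lemma expectation_sqnorm_error_le : 'E_P[fun w => sqnorm (e w)]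
  <= ((1 - pp) * sqnorm eprev + 8%:R * (1 - pp) * L ^+ 2 / b%:R * sqnorm (xk - xk1)
      + 2%:R * (1 - pp) * L ^+ 2 / b%:R * sqnorm (xk1 - xk2) + pp * sigmak ^+ 2)%R%:E.
Proof.
rewrite expectation.unlock integral_split; last first.
  by apply/measurable_EFinP; exact: measurable_sqnorm.
rewrite integral_sqnorm_error_C integral_sqnorm_error_Cn.
apply: le_trans (leeD (lee_wpmul2l _ HSbar_var) (lexx _)) _; first by rewrite lee_fin.
rewrite -EFinM -EFinD lee_fin.
have bV : (0 <= (1 - pp) / b%:R)%R by rewrite divr_ge0.
have HV := ler_wpM2l bV sum_variance_incr_le.
set V := (\sum_(j < p) fine _)%R in HV *.
set s1 := sqnorm (xk - xk1) in HV *; set s2 := sqnorm (xk1 - xk2) in HV *.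
rewrite [leLHS](_ : _ = (1 - pp) * sqnorm eprev + (1 - pp) / b%:R * V + pp * sigmak ^+ 2)%R;
  last by ring.
rewrite [leRHS](_ : _ = (1 - pp) * sqnorm eprev
  + (1 - pp) / b%:R * (8 * L ^+ 2 * s1 + 2 * L ^+ 2 * s2) + pp * sigmak ^+ 2)%R; last by ring.
by rewrite lerD2r lerD2l.
Qed.

Lemma vr_estimator_classB_step :
  classB_step P e (fun w => sqnorm (e w)) eprev (sqnorm eprev) xk xk1 xk2
    pp pp (8%:R * (1 - pp) * L ^+ 2 / b%:R) (2%:R * (1 - pp) * L ^+ 2 / b%:R)
    (pp * sigmak ^+ 2).
Proof.
have Theta_ge0 k : (0 <= k%:R * (1 - pp) * L ^+ 2 / b%:R)%R.
  by rewrite divr_ge0 ?ler0n // mulr_ge0 ?sqr_ge0 // mulr_ge0 ?ler0n.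
split; first by split => //; rewrite mulr_ge0 ?sqr_ge0.
split.
- by split => [w|]; exact: sqnorm_ge0.
- exact: expectation_error.
- exact: lexx.
- exact: expectation_sqnorm_error_le.
Qed.

End vr_estimator.

Local Close Scope ereal_scope.

Theorem mainTheorem7
  (R : realType) (p : nat)
  (* distribution of zeta and the stochastic oracle (setting (E)) *)
  (dZ : measure_display) (Z : measurableType dZ) (mu : probability Z R)
  (Gs : 'rV[R]_p -> Z -> 'rV[R]_p) (G : 'rV[R]_p -> 'rV[R]_p)
  (sigma L : R)
  (HGs_meas : forall x j, measurable_fun setT (fun z => Gs x z ord0 j))
  (HGs_int : forall x j, mu.-integrable setT (fun z => (Gs x z ord0 j)%:E))
  (HG : forall x j, (G x ord0 j)%:E = ('E_mu[fun z => Gs x z ord0 j])%E)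
  (HAb : forall x, ('E_mu[fun z => sqnorm (Gs x z - G x)] <= (sigma ^+ 2)%:E)%E)
  (HAc : forall x y,
     ('E_mu[fun z => sqnorm (Gs x z - Gs y z)] <= (L ^+ 2 * sqnorm (x - y))%:E)%E)
  (* parameters *)
  (pp : R) (b : nat) (Hpp : 0 < pp <= 1) (Hb : (0 < b)%N)
  (* past (F_k-measurable) data: x^k, x^{k-1}, x^{k-2}, Stilde^{k-1} *)
  (xk xk1 xk2 Sprev : 'rV[R]_p) (sigmak : R)
  (* fresh randomness of iteration k *)
  (d : measure_display) (T : measurableType d) (P : probability T R)
  (coin : T -> bool) (batch : 'I_b -> T -> Z) (Sbar : T -> 'rV[R]_p)
  (Hcoin_meas : measurable_fun setT coin)
  (Hcoin_law : P (coin @^-1` [set true]) = pp%:E)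
  (Hbatch_meas : forall i, measurable_fun setT (batch i))
  (Hbatch_law : forall i (A : set Z), measurable A ->
     P (batch i @^-1` A) = mu A)
  (Hindep_batch : indep_coin_batch P coin batch)
  (HSbar_meas : forall j, measurable_fun setT (fun w => Sbar w ord0 j))
  (Hindep_Sbar : indep_coin_vec P coin Sbar)
  (HSbar_mean : forall j, ('E_P[fun w => Sbar w ord0 j])%E
       = ((2%:R *: G xk - G xk1) ord0 j)%:E)
  (HSbar_var : ('E_P[fun w => sqnorm (Sbar w - (2%:R *: G xk - G xk1))]
       <= (sigmak ^+ 2)%:E)%E) :
  let Sk := 2%:R *: G xk - G xk1 in
  let Skm1 := 2%:R *: G xk1 - G xk2 in
  let ek := fun w => vr_estimator Gs coin batch Sbar Sprev xk xk1 xk2 w - Sk in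
  let Deltak := fun w => sqnorm (ek w) in
  let ekm1 := Sprev - Skm1 in
  classB_step P ek Deltak ekm1 (sqnorm ekm1) xk xk1 xk2
    pp pp (8%:R * (1 - pp) * L ^+ 2 / b%:R) (2%:R * (1 - pp) * L ^+ 2 / b%:R)
    (pp * sigmak ^+ 2).
Proof.
exact: (vr_estimator_classB_step HGs_meas HG HAb HAc Hpp Hb xk2 Sprev Hcoin_meas Hcoin_law
  Hbatch_meas Hbatch_law Hindep_batch HSbar_meas Hindep_Sbar HSbar_mean HSbar_var).
Qed.
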